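(* Let $\mathfrak a$ be an abelian ideal of $\mathfrak b$, $\mathcal S\in\mathfrak S_{\mathfrak a}$, $\mathcal M_{\mathcal S}=\{\gamma+\delta\mid\gamma\in\mathcal S,\ \delta\in\Delta^+,\ \gamma+\delta\in\Delta^+\}$ and $J_{\mathcal S}=\Delta_{\mathfrak a}\setminus(\mathcal S\sqcup\mathcal M_{\mathcal S})$. Suppose $\gamma^*\in\max(J_{\mathcal S})$ and $\gamma^*-\delta\in J_{\mathcal S}$ for some $\delta\in\Delta^+$. Let $\mu\in J_{\mathcal S}$. (1) If $\mu-\delta\in\Delta_{\mathfrak a}$, then $\mu-\delta\in J_{\mathcal S}$. (2) If $\mu-2\delta\in\Delta_{\mathfrak a}$, then both $\mu-\delta$ and $\mu-2\delta$ belong to $J_{\mathcal S}$.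
   Context: Let $G$ be a connected simple algebraic group over an algebraically closed field of characteristic zero, $B$ a Borel subgroup, $T\subset B$ a maximal torus, $\mathfrak b=\mathrm{Lie}(B)$, $\Delta$ the root system of $(G,T)$, $\Delta^+$ the positive roots determined by $B$, with partial order $\mu\preccurlyeq\nu$ iff $\nu-\mu$ is a nonnegative integral combination of simple roots; $\max(M)$ is the set of maximal elements of $M$. An abelian ideal of $\mathfrak b$ is a subspace $\mathfrak a\subset\mathfrak b$ with $[\mathfrak b,\mathfrak a]\subset\mathfrak a$, $[\mathfrak a,\mathfrak a]=0$; it is the sum of root spaces for roots in $\Delta_{\mathfrak a}\subset\Delta^+$. Two distinct roots are strongly orthogonal if neither their sum nor their difference is a root; $\mathfrak S_{\mathfrak a}$ is the set of strongly orthogonal subsets of $\Delta_{\mathfrak a}$. *)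

From HB Require Import structures.
From mathcomp Require Import all_boot all_order all_algebra.
From mathcomp Require Import reals.
Set Implicit Arguments. Unset Strict Implicit. Unset Printing Implicit Defensive.
Import Order.TTheory GRing.Theory Num.Theory.
Local Open Scope ring_scope.

Section RootSystems.
Variables (R : realType) (n : nat).
Local Notation V := 'rV[R]_n.

Definition dot (u v : V) : R := (u *m v^T) 0 0.

Definition cartan (b a : V) : R := 2 * dot b a / dot a a.

Definition root_system (Phi : seq V) : Prop :=
  [/\ 0 \notin Phi,
      (forall v : V, (forall a, a \in Phi -> dot v a = 0) -> v = 0),
      (forall a b, a \in Phi -> b \in Phi -> b - cartan b a *: a \in Phi),
      (forall a b, a \in Phi -> b \in Phi -> exists z : int, cartan b a = z%:~R) &
      (forall a (c : R), a \in Phi -> c *: a \in Phi -> c = 1 \/ c = -1)].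

Definition irreducible_rs (Phi : seq V) : Prop :=
  forall A : pred V,
    (exists2 a, a \in Phi & A a) -> (exists2 b, b \in Phi & ~~ A b) ->
    exists a b, [/\ a \in Phi, b \in Phi, A a, ~~ A b & dot a b != 0].

Definition rle (Pi : seq V) (mu nu : V) : Prop :=
  exists c : 'I_(size Pi) -> nat, nu - mu = \sum_(i < size Pi) (c i)%:R *: Pi`_i.

Definition is_base (Phi Pi : seq V) : Prop :=
  [/\ {subset Pi <= Phi},
      (forall c : 'I_(size Pi) -> R,
          \sum_(i < size Pi) c i *: Pi`_i = 0 -> forall i, c i = 0) &
      (forall a, a \in Phi -> rle Pi 0 a \/ rle Pi a 0)].

Definition positive (Phi Pi : seq V) (a : V) : Prop := a \in Phi /\ rle Pi 0 a.

(* Delta_a of an abelian ideal a of b: a subset I of the positive roots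
   closed under adding positive roots ([b,a] in a) and with no two
   elements summing to a root ([a,a] = 0). *)
Definition abelian_ideal (Phi Pi I : seq V) : Prop :=
  [/\ (forall a, a \in I -> positive Phi Pi a),
      (forall a d, a \in I -> positive Phi Pi d -> a + d \in Phi -> a + d \in I) &
      (forall a b, a \in I -> b \in I -> a + b \notin Phi)].

Definition strongly_orth_subset (Phi I S : seq V) : Prop :=
  {subset S <= I} /\
  (forall a b, a \in S -> b \in S -> a != b -> a + b \notin Phi /\ a - b \notin Phi).

Definition inM (Phi Pi S : seq V) (x : V) : Prop :=
  exists g d, [/\ g \in S, positive Phi Pi d, x = g + d & positive Phi Pi x].

Definition inJ (Phi Pi I S : seq V) (x : V) : Prop :=
  [/\ x \in I, x \notin S & ~ inM Phi Pi S x].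

Definition maxJ (Phi Pi I S : seq V) (x : V) : Prop :=
  inJ Phi Pi I S x /\ (forall y, inJ Phi Pi I S y -> rle Pi x y -> y = x).

End RootSystems.

(* If mu - d lay in S, then mu = (mu - d) + d would lie in M_S. If mu - d = g + d'
   with g in S and d' positive, then (mu, g) = 0 (otherwise mu - g = d + d' is a
   positive root and mu lies in M_S), whereas (mu - d, g) > 0 (otherwise the
   g-string through (mu - d) - g = d' would contain (mu - d) + g, which is no root
   since the ideal is abelian). Hence (d, g) < 0, so (gs - d, g) > 0 and gs - d - g
   is a root. If it is positive, gs - d lies in M_S; if it is negative, gs <= mu,
   so mu = gs by maximality and the positive roots g - (gs - d) and d' would sum
   to 0. For part (2), mu - d is a root because either (mu, d) > 0 or
   (mu - 2d, d) < 0; so it lies in the ideal and part (1) applies twice. *)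

From HB Require Import structures.
From mathcomp Require Import all_boot all_order all_algebra.
From mathcomp Require Import reals.
From mathcomp Require Import lra zify.
Import Order.TTheory GRing.Theory Num.Theory.
Local Open Scope ring_scope.

Set Implicit Arguments. Unset Strict Implicit. Unset Printing Implicit Defensive.

Section InnerProduct.
Variables (R : realType) (n : nat).
Implicit Types u v w : 'rV[R]_n.

Lemma dotC u v : dot u v = dot v u.
Proof. by rewrite /dot -(trmxK (v *m u^T)) trmx_mul trmxK [RHS]mxE. Qed.

Lemma dotDl u v w : dot (u + v) w = dot u w + dot v w.
Proof. by rewrite /dot mulmxDl mxE. Qed.

Lemma dotNl u w : dot (- u) w = - dot u w.
Proof. by rewrite /dot mulNmx mxE. Qed.

Lemma dotBl u v w : dot (u - v) w = dot u w - dot v w.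
Proof. by rewrite dotDl dotNl. Qed.

Lemma dotDr u v w : dot w (u + v) = dot w u + dot w v.
Proof. by rewrite dotC dotDl !(dotC w). Qed.

Lemma dotNr u w : dot w (- u) = - dot w u.
Proof. by rewrite dotC dotNl dotC. Qed.

Lemma dotvvE v : dot v v = \sum_i v 0 i ^+ 2.
Proof. by rewrite /dot mxE; apply: eq_bigr => i _; rewrite mxE. Qed.

Lemma dotvv_ge0 v : 0 <= dot v v.
Proof. by rewrite dotvvE sumr_ge0 // => i _; rewrite sqr_ge0. Qed.

Lemma dotvv_eq0 v : dot v v = 0 -> v = 0.
Proof.
rewrite dotvvE => /psumr_eq0P vv0; apply/rowP => j; rewrite !mxE.
by apply/eqP; rewrite -sqrf_eq0 vv0 // => i _; rewrite sqr_ge0.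
Qed.

Lemma dotvv_gt0 v : v != 0 -> 0 < dot v v.
Proof.
by move=> v0; rewrite lt_def dotvv_ge0 andbT; apply: contraNneq v0 => /dotvv_eq0 ->.
Qed.

End InnerProduct.

Section RootSystem.
Variables (R : realType) (n : nat) (Phi : seq 'rV[R]_n).
Hypothesis Phi_rs : root_system Phi.
Implicit Types a b : 'rV[R]_n.

Let reflect_root a b : a \in Phi -> b \in Phi -> b - cartan b a *: a \in Phi.
Proof. by case: Phi_rs => _ _ + _ _; apply. Qed.

Let cartan_int a b : a \in Phi -> b \in Phi -> exists z : int, cartan b a = z%:~R.
Proof. by case: Phi_rs => _ _ _ + _; apply. Qed.

Lemma root_neq0 a : a \in Phi -> a != 0.
Proof. by case: Phi_rs => Phi0 _ _ _ _; apply: contraTneq => ->. Qed.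

Lemma dot_root_gt0 a : a \in Phi -> 0 < dot a a.
Proof. by move/root_neq0; apply: dotvv_gt0. Qed.

Lemma cartan_root_self a : a \in Phi -> cartan a a = 2.
Proof. by move/dot_root_gt0/lt0r_neq0 => a0; rewrite /cartan mulfK. Qed.

Lemma rootN a : a \in Phi -> - a \in Phi.
Proof.
move=> aPhi; have := reflect_root aPhi aPhi.
by rewrite cartan_root_self // scaler_nat mulr2n opprD addNKr.
Qed.

Lemma rootD_cartanN1 a b :
  a \in Phi -> b \in Phi -> cartan b a = -1 -> a + b \in Phi.
Proof.
by move=> aPhi bPhi ba; have := reflect_root aPhi bPhi; rewrite ba scaleN1r opprK addrC.
Qed.

Lemma cartan_dot_lt0 a b : a \in Phi -> b \in Phi -> dot b a < 0 ->
  cartan b a = -1 \/ cartan b a <= -2.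
Proof.
move=> aPhi bPhi ba_lt0; have [z baz] := cartan_int aPhi bPhi.
have z_lt0 : z < 0.
  by rewrite -(ltrz0 R) -baz /cartan pmulr_llt0 ?invr_gt0 ?dot_root_gt0 // pmulr_rlt0.
have [z_eq | z_neq] := eqVneq z (-1); [left; by rewrite baz z_eq | right].
by rewrite baz (_ : -2 = (-2)%:~R) // ler_int; lia.
Qed.

Lemma rootD_dot_lt0 a b :
  a \in Phi -> b \in Phi -> dot a b < 0 -> a + b != 0 -> a + b \in Phi.
Proof.
move=> aPhi bPhi ab_lt0 ab_neq0.
have aa_gt0 := dot_root_gt0 aPhi; have bb_gt0 := dot_root_gt0 bPhi.
case: (cartan_dot_lt0 aPhi bPhi _) => [|ba|ba].
- by rewrite dotC.
- exact: rootD_cartanN1.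
case: (cartan_dot_lt0 bPhi aPhi ab_lt0) => [ab|ab].
  by rewrite addrC; apply: rootD_cartanN1.
(* Both Cartan integers are <= -2, so 2 (a, b) <= - (a, a) - (b, b), i.e. the
   norm of a + b is <= 0. *)
move: ab ba; rewrite /cartan !ler_pdivrMr // (dotC b a) => ab ba.
have : dot (a + b) (a + b) <= 0 by rewrite !dotDl !dotDr (dotC b a); lra.
rewrite le_eqVlt ltNge dotvv_ge0 orbF => /eqP/dotvv_eq0 ab0.
by rewrite ab0 eqxx in ab_neq0.
Qed.

Lemma rootB_dot_gt0 a b :
  a \in Phi -> b \in Phi -> 0 < dot a b -> a != b -> a - b \in Phi.
Proof.
move=> aPhi bPhi ab_gt0 ab_neq; apply: rootD_dot_lt0 => //.
- exact: rootN.
- by rewrite dotNr oppr_lt0.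
- by rewrite subr_eq0.
Qed.

(* a + b is the reflection of a - b in the hyperplane orthogonal to b. *)
Lemma rootD_dot0 a b : b \in Phi -> dot a b = 0 -> a - b \in Phi -> a + b \in Phi.
Proof.
move=> bPhi ab0 abPhi; have := reflect_root bPhi abPhi.
rewrite /cartan dotBl ab0 sub0r mulrN mulNr mulfK ?lt0r_neq0 ?dot_root_gt0 //.
by rewrite scaleNr opprK scaler_nat mulr2n addrA subrK.
Qed.

Lemma rootB_string2 a b :
  a \in Phi -> b \in Phi -> a - b *+ 2 \in Phi -> a != b -> a - b \in Phi.
Proof.
move=> aPhi bPhi ab2Phi ab_neq; have [ab_gt0 | ab_le0] := ltP 0 (dot a b).
  exact: rootB_dot_gt0.
have -> : a - b = a - b *+ 2 + b by rewrite mulr2n opprD addrA subrK.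
apply: rootD_dot_lt0 => //.
  by rewrite dotBl mulr2n dotDl; have := dot_root_gt0 bPhi; lra.
by rewrite mulr2n opprD addrA subrK subr_eq0.
Qed.

End RootSystem.

Section PositiveCone.
Variables (R : realType) (n : nat) (Pi : seq 'rV[R]_n).
Implicit Types x y : 'rV[R]_n.

Lemma subr_rle0 x y : rle Pi 0 (y - x) <-> rle Pi x y.
Proof. by rewrite /rle subr0. Qed.

Lemma addr_rle0 x y : rle Pi 0 x -> rle Pi 0 y -> rle Pi 0 (x + y).
Proof.
move=> [cx]; rewrite subr0 => -> [cy]; rewrite subr0 => ->.
exists (fun i => (cx i + cy i)%N); rewrite subr0 -big_split /=.
by apply: eq_bigr => i _; rewrite natrD scalerDl.
Qed.

Hypothesis Pi_free : forall c : 'I_(size Pi) -> R,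
  \sum_(i < size Pi) c i *: Pi`_i = 0 -> forall i, c i = 0.

Lemma addr_rle0_eq0 x y : rle Pi 0 x -> rle Pi 0 y -> x + y = 0 -> y = 0.
Proof.
move=> [cx]; rewrite subr0 => -> [cy]; rewrite subr0 => -> xy0.
have cxy0 i : (cx i + cy i)%:R = 0 :> R.
  apply: (Pi_free (c := fun j => (cx j + cy j)%:R)).
  rewrite -[RHS]xy0 -big_split /=.
  by apply: eq_bigr => j _; rewrite natrD scalerDl.
apply: big1 => i _; have /eqP := cxy0 i.
by rewrite pnatr_eq0 addn_eq0 => /andP[_ /eqP ->]; rewrite scale0r.
Qed.

End PositiveCone.

Section AbelianIdeal.
Variables (R : realType) (n : nat) (Phi Pi I S : seq 'rV[R]_n).
Hypotheses (Phi_rs : root_system Phi) (Pi_base : is_base Phi Pi).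
Hypotheses (I_ideal : abelian_ideal Phi Pi I) (S_so : strongly_orth_subset Phi I S).
Implicit Types a b d g mu : 'rV[R]_n.

Local Notation positive := (positive Phi Pi).
Local Notation inJ := (inJ Phi Pi I S).

Let Pi_free : forall c : 'I_(size Pi) -> R,
    \sum_(i < size Pi) c i *: Pi`_i = 0 -> forall i, c i = 0.
Proof. by case: Pi_base. Qed.

Let root_sign a : a \in Phi -> rle Pi 0 a \/ rle Pi a 0.
Proof. by case: Pi_base => _ _; apply. Qed.

Let I_pos a : a \in I -> positive a.
Proof. by case: I_ideal => + _ _; apply. Qed.

Let I_up a d : a \in I -> positive d -> a + d \in Phi -> a + d \in I.
Proof. by case: I_ideal => _ + _; apply. Qed.

Let I_abel a b : a \in I -> b \in I -> a + b \notin Phi.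
Proof. by case: I_ideal => _ _; apply. Qed.

Let S_sub : {subset S <= I}.
Proof. by case: S_so. Qed.

Lemma positive_addr_neq0 a b : positive a -> positive b -> a + b != 0.
Proof.
move=> [_ a0] [bPhi b0]; apply: contraTneq (root_neq0 Phi_rs bPhi) => ab0.
by rewrite (addr_rle0_eq0 Pi_free a0 b0 ab0) eqxx.
Qed.

Lemma ideal_dot_ge0 a b : a \in I -> b \in I -> 0 <= dot a b.
Proof.
move=> aI bI; rewrite leNgt; apply/negP => ab_lt0.
have [[aPhi _] [bPhi _]] := (I_pos aI, I_pos bI).
move/negP: (I_abel aI bI); apply.
apply: (rootD_dot_lt0 Phi_rs) => //.
exact: positive_addr_neq0 (I_pos aI) (I_pos bI).
Qed.

Lemma ideal_subr_of_subr2 mu d :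
  mu \in I -> mu - d *+ 2 \in I -> positive d -> mu - d \in I.
Proof.
move=> muI mud2I d_pos; have [[muPhi _] [dPhi _]] := (I_pos muI, d_pos).
have mud2_d : mu - d *+ 2 + d = mu - d by rewrite mulr2n opprD addrA subrK.
have mu_neq_d : mu != d.
  apply: contraTneq (positive_addr_neq0 d_pos (I_pos mud2I)) => ->.
  by rewrite mulr2n opprD !addrA addrK subrr eqxx.
rewrite -mud2_d; apply: I_up => //; rewrite mud2_d.
by apply: (rootB_string2 Phi_rs) => //; exact: (I_pos mud2I).1.
Qed.

Lemma inJ_dot_eq0 mu g : inJ mu -> g \in S -> rle Pi 0 (mu - g) -> dot mu g = 0.
Proof.
move=> [muI muS muM] gS mug0; have gI := S_sub gS.
apply/eqP; rewrite eq_le ideal_dot_ge0 // andbT leNgt.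
apply: contra_notN muM => mug_gt0.
have mu_neq_g : mu != g by apply: contraNneq muS => ->.
have mugPhi := rootB_dot_gt0 Phi_rs (I_pos muI).1 (I_pos gI).1 mug_gt0 mu_neq_g.
by exists g, (mu - g); split => //; [rewrite addrC subrK | exact: I_pos].
Qed.

Lemma inM_subr_dot_lt0 mu d g d' : inJ mu -> mu - d \in I -> positive d ->
  g \in S -> positive d' -> mu - d = g + d' -> dot d g < 0.
Proof.
move=> muJ mudI [_ d0] gS [d'Phi d'0] mud_eq; have gI := S_sub gS.
have mug0 : dot mu g = 0.
  apply: inJ_dot_eq0 muJ gS _.
  have -> : mu - g = d + d'.
    by apply/eqP; rewrite subr_eq -(subrK d mu) mud_eq addrC [g + d']addrC addrA.
  exact: addr_rle0.
have mud_g_gt0 : 0 < dot (mu - d) g.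
  rewrite lt_def ideal_dot_ge0 // andbT.
  apply: contraTneq (I_abel mudI gI) => mud_g0.
  by rewrite negbK (rootD_dot0 Phi_rs (I_pos gI).1 mud_g0) // mud_eq addrC addKr.
by move: mud_g_gt0; rewrite dotBl mug0 sub0r oppr_gt0.
Qed.

Variables (gs d : 'rV[R]_n).
Hypotheses (gs_max : maxJ Phi Pi I S gs) (d_pos : positive d) (gsd_J : inJ (gs - d)).

Lemma inJ_subr mu : inJ mu -> mu - d \in I -> inJ (mu - d).
Proof.
move=> muJ mudI; have [muI muS muM] := muJ; have [gsdI gsdS gsdM] := gsd_J.
have [[gsI _ _] gs_maximal] := gs_max.
split=> //.
  apply: contra_notN muM => mudS.
  by exists (mu - d), d; split; rewrite ?subrK //; exact: I_pos.
move=> [g [d' [gS d'_pos mud_eq _]]]; have gI := S_sub gS.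
have dg_lt0 := inM_subr_dot_lt0 muJ mudI d_pos gS d'_pos mud_eq.
have gsdgPhi : gs - d - g \in Phi.
  apply: (rootB_dot_gt0 Phi_rs (I_pos gsdI).1 (I_pos gI).1).
    by rewrite dotBl; have := ideal_dot_ge0 gsI gI; lra.
  by apply: contraNneq gsdS => ->.
case: (root_sign gsdgPhi) => [gsdg0 | /subr_rle0 gsdg0].
  apply: gsdM; exists g, (gs - d - g); split => //; last exact: I_pos.
  by rewrite [RHS]addrC subrK.
have gsdg_pos : positive (g - (gs - d)).
  by split; [rewrite -opprB; exact: rootN | move: gsdg0; rewrite sub0r opprB].
have mu_gs : mu - gs = g - (gs - d) + d'.
  by rewrite addrAC -mud_eq opprB addrA subrK.
have mu_eq_gs : mu = gs.
  apply: gs_maximal muJ _; apply/subr_rle0; rewrite mu_gs.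
  exact: addr_rle0 gsdg_pos.2 d'_pos.2.
by have := positive_addr_neq0 gsdg_pos d'_pos; rewrite -mu_gs mu_eq_gs subrr eqxx.
Qed.

End AbelianIdeal.

Theorem lemma3p8 (R : realType) (n : nat) (Phi Pi I S : seq 'rV[R]_n)
  (gs d mu : 'rV[R]_n) :
  root_system Phi -> irreducible_rs Phi -> is_base Phi Pi ->
  abelian_ideal Phi Pi I -> strongly_orth_subset Phi I S ->
  maxJ Phi Pi I S gs -> positive Phi Pi d -> inJ Phi Pi I S (gs - d) ->
  inJ Phi Pi I S mu ->
  (mu - d \in I -> inJ Phi Pi I S (mu - d)) /\
  (mu - d *+ 2 \in I -> inJ Phi Pi I S (mu - d) /\ inJ Phi Pi I S (mu - d *+ 2)).
Proof.
move=> Phi_rs _ Pi_base I_ideal S_so gs_max d_pos gsd_J muJ.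
have inJ_subr_d := inJ_subr Phi_rs Pi_base I_ideal S_so gs_max d_pos gsd_J.
split=> [|mud2I]; first exact: inJ_subr_d.
have mudI : mu - d \in I.
  have [muI _ _] := muJ.
  exact: (ideal_subr_of_subr2 Phi_rs Pi_base I_ideal muI mud2I d_pos).
have mudJ := inJ_subr_d mu muJ mudI.
have mud2_eq : mu - d *+ 2 = mu - d - d by rewrite mulr2n opprD addrA.
by split=> //; rewrite mud2_eq; apply: inJ_subr_d => //; rewrite -mud2_eq.
Qed.
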